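(* Let $G$ be a graph and let $S$ be a twin cover of $G$ with $|S|=k$. Let $\alpha$ and $\beta$ be two specification functions for $G$ and let $\sigma$ and $\pi$ be two clean layouts of $G$ that are similar with respect to $S$. If $\sigma$ and $\pi$ both respect $\alpha$ in count and $\beta$ in size, then $\mathcal{I}(\sigma)=\mathcal{I}(\pi)$.
   Context: All graphs are finite, simple and undirected; $n=|V(G)|$. For a layout (linear ordering) $\sigma$ of $V(G)$, $N_L(v,\sigma)$, $N_R(v,\sigma)$ are the neighbours of $v$ before/after $v$; $\mathcal{I}(v,\sigma)=\big||N_L(v,\sigma)|-|N_R(v,\sigma)|\big|$ and $\mathcal{I}(\sigma)=\sum_v\mathcal{I}(v,\sigma)$. A twin cover of $G$ is a set $S\subseteq V(G)$ such that every connected component $X$ of $G-S$ is a set of true twins ($N[u]=N[v]$ for $u,v\in X$); these components are called the cliques of $G-S$. The type of a clique $C$ is $N(v)\cap S$ for $v\in C$. A clique is large if it has more than $k$ vertices, small otherwise. Let $\mathcal{C}=(2^S\times\{0\}\times[k])\cup(2^S\times\{1\}\times\{e,o\})$; the class of a clique $C$ of type $T$ is $(T,1,o)$ if $C$ is large with $|C|$ odd, $(T,1,e)$ if $C$ is large with $|C|$ even, and $(T,0,j)$ if $C$ is small with $|C|=j$. A layout is clean if the vertices of each clique of $G-S$ appear consecutively; in a clean layout $\sigma$, the location of a clique $C$ is $|\{s\in S: s<_\sigma v\}|+1\in[k+1]$ for any $v\in C$. A specification function is a map $\mathcal{C}\times[k+1]\to\{0,1,\dots,n\}$. A clean layout $\sigma$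 respects $\alpha$ in count if for every $j\in[k+1]$ and $\nu\in\mathcal{C}$ the number of cliques of class $\nu$ at location $j$ is $\alpha(\nu,j)$, and respects $\beta$ in size if for every $j,\nu$ the total number of vertices in cliques of class $\nu$ at location $j$ is $\beta(\nu,j)$. Two layouts are similar with respect to $S$ if their restrictions to $S$ are the same ordering. *)

From mathcomp Require Import all_boot.
Set Implicit Arguments. Unset Strict Implicit. Unset Printing Implicit Defensive.

Section Defs.
Variables (T : finType) (e : rel T).

Definition simple_graph : Prop := symmetric e /\ irreflexive e.

Definition is_layout (s : seq T) : Prop := uniq s /\ forall v, v \in s.

Definition before (s : seq T) (u v : T) : bool := index u s < index v s.

Definition NL (s : seq T) (v : T) : {set T} := [set u | e v u & before s u v].
Definition NR (s : seq T) (v : T) : {set T} := [set u | e v u & before s v u].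

(* | |N_L| - |N_R| | (absolute difference in nat) *)
Definition imb_v (s : seq T) (v : T) : nat :=
  (#|NL s v| - #|NR s v|) + (#|NR s v| - #|NL s v|).

Definition imbalance (s : seq T) : nat := \sum_(v : T) imb_v s v.

Variable S : {set T}.

Definition eGS : rel T := [rel u v | [&& e u v, u \notin S & v \notin S]].

Definition cnbh (v : T) : {set T} := v |: [set w | e v w].

Definition twin_cover : Prop :=
  forall u v, u \notin S -> v \notin S -> connect eGS u v -> cnbh u = cnbh v.

Definition comp (v : T) : {set T} := [set u | (u \notin S) && connect eGS v u].

Definition cliques : {set {set T}} := [set comp v | v in ~: S].

Definition ctype (C : {set T}) : {set T} :=
  match [pick v in C] with
  | Some v => [set w in S | e v w]
  | None => set0
  end.

(* Classes are encoded as triples (T', b, m):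
   (T', true, 1)  <-> (T', 1, o)   (large, odd size)
   (T', true, 0)  <-> (T', 1, e)   (large, even size)
   (T', false, j) <-> (T', 0, j)   (small, size j, 1 <= j <= k) *)
Definition class_t := ({set T} * bool * nat)%type.

Definition in_classes (nu : class_t) : bool :=
  let: (Ty, b, m) := nu in
  (Ty \subset S) && (if b then m < 2 else (1 <= m <= #|S|)).

Definition cclass (C : {set T}) : class_t :=
  if #|S| < #|C| then (ctype C, true, nat_of_bool (odd #|C|))
  else (ctype C, false, #|C|).

Definition clean (s : seq T) : Prop :=
  forall C, C \in cliques -> forall u w x, u \in C -> w \in C ->
    before s u x -> before s x w -> x \in C.

Definition vloc (s : seq T) (v : T) : nat := #|[set x in S | before s x v]|.+1.

Definition cloc (s : seq T) (C : {set T}) : nat :=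
  match [pick v in C] with Some v => vloc s v | None => 0 end.

Definition spec_fun (alpha : class_t -> nat -> nat) : Prop :=
  forall nu j, in_classes nu -> 1 <= j <= #|S|.+1 -> alpha nu j <= #|T|.

Definition cliques_at (s : seq T) (nu : class_t) (j : nat) : {set {set T}} :=
  [set C in cliques | (cclass C == nu) && (cloc s C == j)].

Definition respects_count (s : seq T) (alpha : class_t -> nat -> nat) : Prop :=
  forall nu j, in_classes nu -> 1 <= j <= #|S|.+1 ->
    #|cliques_at s nu j| = alpha nu j.

Definition respects_size (s : seq T) (beta : class_t -> nat -> nat) : Prop :=
  forall nu j, in_classes nu -> 1 <= j <= #|S|.+1 ->
    \sum_(C in cliques_at s nu j) #|C| = beta nu j.

Definition similar (s p : seq T) : Prop :=
  forall x y, x \in S -> y \in S -> before s x y = before p x y.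

End Defs.

(* The imbalance splits into the contributions of the vertices of S and of the cliques of
   G - S. A vertex v of S sees, on each side, its neighbours in S (fixed by the order on S) and
   whole cliques whose type contains v, so its imbalance only depends on the total size of the
   cliques of each class at each location, which beta prescribes. In a clique C at location j
   whose type has a vertices before j and b after it, the i-th vertex has a + i neighbours on
   its left and b + |C| - 1 - i on its right, so C contributes block_imb |C| a b. For a small
   clique this depends only on its class and location; for a large one a + b <= k < |C|, and
   block_imb |C| a b - block_imb |C| 0 0 depends only on a, b and the parity of |C|. Summing
   over the cliques, alpha then fixes the total. *)

From Pilot Require Import Defs.
From mathcomp Require Import all_boot zify.
Set Implicit Arguments. Unset Strict Implicit. Unset Printing Implicit Defensive.

Lemma partition_big_seq (I : finType) (K : eqType) (P : pred I) (key : I -> K)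
    (r : seq K) (F : I -> nat) :
  uniq r -> (forall i, P i -> key i \in r) ->
  \sum_(i | P i) F i = \sum_(x <- r) \sum_(i | P i && (key i == x)) F i.
Proof.
move=> r_uniq key_r; under [RHS]eq_bigr do rewrite big_mkcondr /=.
rewrite exchange_big /=; apply: eq_bigr => i Pi.
rewrite -big_mkcond big_const_seq iter_addn_0 mulnC.
have -> : count (eq_op (key i)) r = count_mem (key i) r.
  by apply: eq_count => x; rewrite /= eq_sym.
by rewrite count_uniq_mem // (key_r i Pi) mul1n.
Qed.

Lemma eq_sum_by_key (I : finType) (K : eqType) (A : {pred I}) (k1 k2 : I -> K)
    (G : K -> nat) (w : I -> nat) :
  (forall x, \sum_(i in A | k1 i == x) w i = \sum_(i in A | k2 i == x) w i) ->
  \sum_(i in A) G (k1 i) * w i = \sum_(i in A) G (k2 i) * w i.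
Proof.
move=> same_weight.
pose r := undup (image k1 A ++ image k2 A).
have r_uniq : uniq r by exact: undup_uniq.
have mem_r k i : k = k1 \/ k = k2 -> i \in A -> k i \in r.
  by move=> [->|->] iA; rewrite mem_undup mem_cat image_f ?orbT.
rewrite (@partition_big_seq _ _ _ k1 r) => // [|i]; last by apply: mem_r; left.
rewrite [RHS](@partition_big_seq _ _ _ k2 r) => // [|i]; last by apply: mem_r; right.
apply: eq_bigr => x _.
have factor k : \sum_(i in A | k i == x) G (k i) * w i = G x * \sum_(i in A | k i == x) w i.
  by rewrite big_distrr; apply: eq_bigr => i /andP[_ /eqP ->].
by rewrite !factor same_weight.
Qed.

Definition rank (T : finType) (s : seq T) (A : {set T}) (x : T) : nat :=
  #|[set y in A | before s y x]|.

Section LayoutOrder.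
Variables (T : finType) (s : seq T).
Hypothesis s_layout : is_layout s.

Lemma before_irr x : before s x x = false.
Proof. by rewrite /before ltnn. Qed.

Lemma before_trans : transitive (before s).
Proof. by move=> y x z; rewrite /before; lia. Qed.

Lemma before_neq x y : x != y -> before s x y = ~~ before s y x.
Proof.
move=> x_ne_y; have idx_ne : index x s != index y s.
  case: s_layout => _ s_all; apply: contra_neq x_ne_y.
  exact: index_inj (s_all x) (s_all y).
by rewrite /before; lia.
Qed.

Lemma rank_le (A : {set T}) x y : before s x y -> rank s A x <= rank s A y.
Proof.
move=> bxy; apply/subset_leq_card/subsetP => z.
by rewrite !inE => /andP[-> bzx]; exact: before_trans bzx bxy.
Qed.

Lemma rank_lt (A : {set T}) x y : x \in A -> before s x y -> rank s A x < rank s A y.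
Proof.
move=> xA bxy; apply/proper_card/properP; split.
  by apply/subsetP => z; rewrite !inE => /andP[-> bzx]; exact: before_trans bzx bxy.
by exists x; rewrite !inE ?xA ?bxy ?before_irr ?andbF.
Qed.

Lemma before_rank (A : {set T}) x y : x \in A -> before s x y = (rank s A x < rank s A y).
Proof.
move=> xA; case bxy: (before s x y); first by rewrite rank_lt.
have [<-|x_ne_y] := eqVneq x y; first by rewrite ltnn.
by apply/esym/negbTE; rewrite -leqNgt rank_le // before_neq 1?eq_sym // bxy.
Qed.

Lemma rank_inj (A : {set T}) : {in A &, injective (rank s A)}.
Proof.
move=> x y xA yA eq_rank; apply/eqP/negP => /negP x_ne_y.
move: (before_neq x_ne_y); rewrite !(before_rank _ xA) !(before_rank _ yA) eq_rank.
by rewrite ltnn.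
Qed.

Lemma rank_lt_card (A : {set T}) x : x \in A -> rank s A x < #|A|.
Proof.
move=> xA; apply/proper_card/properP; split.
  by apply/subsetP => z; rewrite inE => /andP[].
by exists x => //; rewrite inE before_irr andbF.
Qed.

Lemma sum_rank (A : {set T}) (F : nat -> nat) :
  \sum_(x in A) F (rank s A x) = \sum_(0 <= i < #|A|) F i.
Proof.
rewrite -big_enum -(big_map (rank s A) xpredT F); apply: perm_big.
have ranks_uniq : uniq [seq rank s A x | x <- enum A].
  by rewrite map_inj_in_uniq ?enum_uniq // => x y; rewrite !mem_enum; exact: rank_inj.
rewrite /index_iota subn0; apply: uniq_perm; rewrite ?iota_uniq //.
have ranks_sub : {subset [seq rank s A x | x <- enum A] <= iota 0 #|A|}.
  by move=> _ /mapP[x xA ->]; rewrite mem_iota /= rank_lt_card // -mem_enum.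
have [|_ //] := uniq_min_size ranks_uniq ranks_sub.
by rewrite size_iota size_map -cardE.
Qed.

Lemma card_after (A : {set T}) x : x \in A ->
  #|[set y in A | before s x y]| = #|A|.-1 - rank s A x.
Proof.
move=> xA; rewrite -(cardsID [set y | before s y x] A).
have -> : A :\: [set y | before s y x] = x |: [set y in A | before s x y].
  apply/setP => y; rewrite !inE; have [->|y_ne_x] := eqVneq y x; first by rewrite xA before_irr.
  by rewrite before_neq // negbK andbC.
rewrite cardsU1 inE before_irr andbF /rank.
have -> : A :&: [set y | before s y x] = [set y in A | before s y x].
  by apply/setP => y; rewrite !inE.
lia.
Qed.

End LayoutOrder.

Definition distn (m n : nat) := (m - n) + (n - m).

Definition block_imb (c a b : nat) := \sum_(0 <= i < c) distn (a + i) (b + (c.-1 - i)).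

Lemma block_imb_add2 c a b : a + b <= c.+1 ->
  block_imb c.+2 a b = block_imb c a b + (c.+1).*2.
Proof.
move=> abc; rewrite /block_imb big_nat_recl // big_nat_recr //=.
have -> : \sum_(0 <= i < c) distn (a + i.+1) (b + (c.+1 - i.+1)) =
          \sum_(0 <= i < c) distn (a + i) (b + (c.-1 - i)).
  by apply: eq_big_nat => i /andP[_ ic]; rewrite /distn; lia.
rewrite /distn; lia.
Qed.

Lemma block_imb_parity c c' a b : a + b < c' <= c -> odd c' = odd c ->
  block_imb c a b + block_imb c' 0 0 = block_imb c 0 0 + block_imb c' a b.
Proof.
move=> /andP[ab_c' c'_c] par.
have [n -> {c c'_c par}] : exists n, c = c' + n.*2.
  by exists (c - c')./2; rewrite halfK oddB // par addbb subn0; lia.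
elim: n => [|n IH]; first by rewrite addn0 addnC.
rewrite doubleS !addnS !block_imb_add2; lia.
Qed.

Definition next_of_parity (b : bool) (n : nat) := n.+1 + (odd n == b).

Lemma next_of_parity_gt b n : n < next_of_parity b n.
Proof. by rewrite /next_of_parity; lia. Qed.

Lemma odd_next_of_parity b n : odd (next_of_parity b n) = b.
Proof. by rewrite /next_of_parity oddD /=; case: b; case: (odd n). Qed.

Lemma next_of_parity_min b n c : n < c -> odd c = b -> next_of_parity b n <= c.
Proof.
rewrite /next_of_parity => n_c <-; case: eqP => [odd_n|_]; last by rewrite addn0.
rewrite addn1 ltn_neqAle n_c andbT; apply/eqP => cn.
by move: odd_n; rewrite -cn /=; case: (odd n).
Qed.

Section TypeCounts.
Variables (T : finType) (S : {set T}).

Definition left_type (q : seq T) (Ty : {set T}) (j : nat) : nat :=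
  #|[set u in Ty | vloc S q u < j]|.

Definition right_type (q : seq T) (Ty : {set T}) (j : nat) : nat :=
  #|[set u in Ty | j <= vloc S q u]|.

Lemma left_right_type_le (q : seq T) (Ty : {set T}) j : Ty \subset S ->
  left_type q Ty j + right_type q Ty j <= #|S|.
Proof.
move=> TyS; rewrite /left_type /right_type -cardsUI.
have -> : [set u in Ty | vloc S q u < j] :&: [set u in Ty | j <= vloc S q u] = set0.
  by apply/setP => u; rewrite !inE; case: (u \in Ty); rewrite //= leqNgt andNb.
rewrite cards0 addn0; apply/subset_leq_card/(subset_trans _ TyS).
by apply/subsetP => u; rewrite !inE => /orP[] /andP[].
Qed.

End TypeCounts.

Lemma cclass_type (T : finType) (e : rel T) (S C : {set T}) :
  (cclass e S C).1.1 = ctype e S C.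
Proof. by rewrite /cclass; case: ifP. Qed.

(* By block_imb_parity a large class may be represented by any size above |S| with the
   right parity; this is the least one. *)
Definition class_size (T : finType) (S : {set T}) (nu : class_t T) : nat :=
  if nu.1.2 then next_of_parity (odd nu.2) #|S| else nu.2.

Lemma block_imb_cclass (T : finType) (e : rel T) (S C : {set T}) a b : a + b <= #|S| ->
  block_imb #|C| a b + block_imb (class_size S (cclass e S C)) 0 0 =
  block_imb #|C| 0 0 + block_imb (class_size S (cclass e S C)) a b.
Proof.
move=> ab_S; rewrite /cclass; case: ifP => large; rewrite /class_size /=; last by rewrite addnC.
apply: block_imb_parity; rewrite ?odd_next_of_parity ?oddb //.
by rewrite (leq_ltn_trans ab_S (next_of_parity_gt _ _)) next_of_parity_min.
Qed.

Section TwinCover.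
Variables (T : finType) (e : rel T) (S : {set T}).
Hypotheses (e_sym : symmetric e) (e_irr : irreflexive e) (S_twin : twin_cover e S).

Lemma eGS_sym : symmetric (eGS e S).
Proof. by move=> x y; rewrite /eGS /= (e_sym x); case: (x \in S); rewrite /= ?andbT ?andbF. Qed.

Lemma comp_id v : v \notin S -> v \in Defs.comp e S v.
Proof. by move=> vS; rewrite inE vS connect0. Qed.

Lemma comp_eq v u : u \in Defs.comp e S v -> Defs.comp e S u = Defs.comp e S v.
Proof.
rewrite inE => /andP[_ vu]; apply/setP => w; rewrite !inE; congr (_ && _).
apply/idP/idP; first exact: connect_trans vu.
by rewrite (sym_connect_sym eGS_sym) in vu; exact: connect_trans vu.
Qed.

Lemma cliquesP C : C \in cliques e S -> exists2 v, v \notin S & C = Defs.comp e S v.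
Proof. by case/imsetP => v; rewrite inE => vS ->; exists v. Qed.

Lemma clique_notin C u : C \in cliques e S -> u \in C -> u \notin S.
Proof. by case/cliquesP => v _ ->; rewrite inE => /andP[]. Qed.

Lemma clique_comp C u : C \in cliques e S -> u \in C -> C = Defs.comp e S u.
Proof. by case/cliquesP => v _ -> /comp_eq ->. Qed.

Lemma clique_card_gt0 C : C \in cliques e S -> 0 < #|C|.
Proof. by case/cliquesP => v vS ->; apply/card_gt0P; exists v; exact: comp_id. Qed.

Lemma clique_twins C u v : C \in cliques e S -> u \in C -> v \in C ->
  cnbh e u = cnbh e v.
Proof.
move=> CS uC vC; apply: S_twin; rewrite ?(clique_notin CS uC) ?(clique_notin CS vC) //.
by move: vC; rewrite (clique_comp CS uC) inE => /andP[].
Qed.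

Lemma clique_adj C v u : C \in cliques e S -> v \in C -> u \notin S ->
  e v u = (u \in C) && (u != v).
Proof.
move=> CS vC uS; case uC: (u \in C) => /=.
  have [->|u_ne_v] := eqVneq u v; first exact: e_irr.
  by move/setP/(_ u): (clique_twins CS uC vC); rewrite !inE eqxx (negbTE u_ne_v).
apply/negbTE/negP => evu; move: uC; rewrite (clique_comp CS vC) inE uS /=.
by rewrite connect1 // /eGS /= evu (clique_notin CS vC).
Qed.

Lemma mem_ctype C v w : C \in cliques e S -> v \in C -> w \in S ->
  (w \in ctype e S C) = e v w.
Proof.
move=> CS vC wS; rewrite /ctype; case: pickP => [u uC|]; last by move/(_ v); rewrite vC.
have w_notin_C x : x \in C -> (w == x) = false.
  by move=> xC; apply/negbTE; apply: contraTneq wS => ->; exact: clique_notin xC.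
move/setP/(_ w): (clique_twins CS uC vC).
by rewrite !inE wS !w_notin_C.
Qed.

Lemma ctype_sub C : ctype e S C \subset S.
Proof.
rewrite /ctype; case: pickP => [u _|_]; last exact: sub0set.
by apply/subsetP => w; rewrite inE => /andP[].
Qed.

Lemma cclass_in_classes C : C \in cliques e S -> in_classes S (cclass e S C).
Proof.
move=> CS; rewrite /cclass; case: ifP => large /=; rewrite ctype_sub //=.
  by case: (odd #|C|).
by rewrite clique_card_gt0 // leqNgt large.
Qed.

Lemma card_setD_sum (A : {set T}) : #|A :\: S| = \sum_(u in ~: S) (u \in A).
Proof.
rewrite -sum1_card big_mkcond [RHS]big_mkcond /=; apply: eq_bigr => u _.
by rewrite !inE; case: (u \in S); case: (u \in A).
Qed.

Lemma sum_notin_cliques (F : T -> nat) :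
  \sum_(u in ~: S) F u = \sum_(C in cliques e S) \sum_(u in C) F u.
Proof.
rewrite (partition_big_imset (Defs.comp e S)); apply: eq_bigr => C CS.
apply: eq_bigl => u; rewrite inE; apply/andP/idP => [[uS /eqP <-]|uC].
  exact: comp_id.
by rewrite (clique_notin CS uC) -(clique_comp CS uC).
Qed.

Lemma imbalance_split q : imbalance e q =
  \sum_(v in S) imb_v e q v + \sum_(C in cliques e S) \sum_(v in C) imb_v e q v.
Proof.
rewrite /imbalance (bigID (mem S)) /= -sum_notin_cliques; congr (_ + _).
by apply: eq_bigl => v; rewrite inE.
Qed.

Section CleanLayout.
Variable q : seq T.
Hypotheses (q_layout : is_layout q) (q_clean : clean e S q).

Lemma vloc_clique C u v : C \in cliques e S -> u \in C -> v \in C ->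
  vloc S q u = vloc S q v.
Proof.
move=> CS; suff vloc_eq u' v' : u' \in C -> v' \in C -> before q u' v' ->
    vloc S q u' = vloc S q v'.
  move=> uC vC; have [->//|u_ne_v] := eqVneq u v.
  case quv: (before q u v); first exact: vloc_eq.
  by apply/esym/vloc_eq; rewrite // (before_neq q_layout (x := v)) 1?eq_sym ?quv.
move=> uC vC quv; congr _.+1; apply: eq_card => y; rewrite !inE.
case yS: (y \in S) => //=; apply/idP/idP => [qyu|qyv]; first exact: before_trans qyu quv.
have u_ne_y : u' != y by apply: contraTneq yS => <-; exact: clique_notin CS uC.
apply: contraTT yS => qyu; rewrite -(before_neq q_layout) // in qyu.
exact: clique_notin CS (q_clean CS uC vC qyu qyv).
Qed.

Lemma cloc_clique C u : C \in cliques e S -> u \in C -> cloc S q C = vloc S q u.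
Proof.
move=> CS uC; rewrite /cloc; case: pickP => [v vC|]; last by move/(_ u); rewrite uC.
exact: vloc_clique vC uC.
Qed.

Lemma vloc_le v : vloc S q v <= #|S|.+1.
Proof. by rewrite ltnS; apply/subset_leq_card/subsetP => x; rewrite inE => /andP[]. Qed.

Lemma cloc_range C : C \in cliques e S -> 0 < cloc S q C <= #|S|.+1.
Proof.
move=> CS; have /card_gt0P[u uC] := clique_card_gt0 CS.
by rewrite (cloc_clique CS uC) vloc_le andbT.
Qed.

Lemma before_S_clique C u v : C \in cliques e S -> v \in C -> u \in S ->
  before q u v = (vloc S q u < cloc S q C).
Proof. by move=> CS vC uS; rewrite (cloc_clique CS vC) ltnS (before_rank q_layout _ uS). Qed.

Lemma before_clique_S C u v : C \in cliques e S -> v \in C -> u \in S ->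
  before q v u = (cloc S q C <= vloc S q u).
Proof.
move=> CS vC uS; have v_ne_u : v != u by apply: contraTneq uS => <-; exact: clique_notin vC.
by rewrite (before_neq q_layout v_ne_u) (before_S_clique CS vC uS) -leqNgt.
Qed.

Lemma card_NL_clique C v : C \in cliques e S -> v \in C ->
  #|NL e q v| = left_type S q (ctype e S C) (cloc S q C) + rank q C v.
Proof.
move=> CS vC; rewrite -(cardsID S) /left_type /rank.
congr (_ + _); apply: eq_card => u; rewrite !inE.
  have [uS|uS] := boolP (u \in S).
    by rewrite andbT (mem_ctype CS vC uS) (before_S_clique CS vC uS).
  rewrite andbF; apply/esym/negbTE; apply: contra uS.
  by case/andP => /(subsetP (ctype_sub C)).
have [uS|uS] /= := boolP (u \in S).
  by apply/esym/negbTE; apply: contraL uS => /andP[uC _]; exact: clique_notin CS uC.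
rewrite (clique_adj CS vC uS).
by have [->|] := eqVneq u v; rewrite ?before_irr ?andbF ?andbT.
Qed.

Lemma card_NR_clique C v : C \in cliques e S -> v \in C ->
  #|NR e q v| = right_type S q (ctype e S C) (cloc S q C) + (#|C|.-1 - rank q C v).
Proof.
move=> CS vC; rewrite -(cardsID S) /right_type -(card_after q_layout vC).
congr (_ + _); apply: eq_card => u; rewrite !inE.
  have [uS|uS] := boolP (u \in S).
    by rewrite andbT (mem_ctype CS vC uS) (before_clique_S CS vC uS).
  rewrite andbF; apply/esym/negbTE; apply: contra uS.
  by case/andP => /(subsetP (ctype_sub C)).
have [uS|uS] /= := boolP (u \in S).
  by apply/esym/negbTE; apply: contraL uS => /andP[uC _]; exact: clique_notin CS uC.
rewrite (clique_adj CS vC uS).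
by have [->|] := eqVneq u v; rewrite ?before_irr ?andbF ?andbT.
Qed.

Lemma sum_imb_clique C : C \in cliques e S ->
  \sum_(v in C) imb_v e q v =
  block_imb #|C| (left_type S q (ctype e S C) (cloc S q C))
                 (right_type S q (ctype e S C) (cloc S q C)).
Proof.
move=> CS; rewrite /block_imb -(sum_rank q_layout C (fun i => distn (_ + i) (_ + (_ - i)))).
by apply: eq_bigr => v vC; rewrite /imb_v (card_NL_clique CS vC) (card_NR_clique CS vC).
Qed.

Lemma card_NL_S v : v \in S ->
  #|NL e q v| = #|NL e q v :&: S| +
    \sum_(C in cliques e S) ((v \in ctype e S C) && (cloc S q C <= vloc S q v)) * #|C|.
Proof.
move=> vS; rewrite -(cardsID S) card_setD_sum sum_notin_cliques; congr (_ + _).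
apply: eq_bigr => C CS; rewrite mulnC -sum_nat_const; apply: eq_bigr => u uC.
by rewrite inE e_sym (mem_ctype CS uC vS) (before_clique_S CS uC vS).
Qed.

Lemma card_NR_S v : v \in S ->
  #|NR e q v| = #|NR e q v :&: S| +
    \sum_(C in cliques e S) ((v \in ctype e S C) && (vloc S q v < cloc S q C)) * #|C|.
Proof.
move=> vS; rewrite -(cardsID S) card_setD_sum sum_notin_cliques; congr (_ + _).
apply: eq_bigr => C CS; rewrite mulnC -sum_nat_const; apply: eq_bigr => u uC.
by rewrite inE e_sym (mem_ctype CS uC vS) (before_S_clique CS uC vS).
Qed.

End CleanLayout.

Section SimilarLayouts.
Variables s p : seq T.
Hypotheses (s_layout : is_layout s) (p_layout : is_layout p).
Hypotheses (s_clean : clean e S s) (p_clean : clean e S p).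
Hypothesis sp_similar : similar S s p.

Lemma vloc_similar v : v \in S -> vloc S s v = vloc S p v.
Proof.
move=> vS; congr _.+1; apply: eq_card => x; rewrite !inE.
by case xS: (x \in S); rewrite //= sp_similar.
Qed.

Lemma left_type_similar (Ty : {set T}) j : Ty \subset S ->
  left_type S s Ty j = left_type S p Ty j.
Proof.
move=> TyS; apply: eq_card => u; rewrite !inE.
by case uTy: (u \in Ty); rewrite //= vloc_similar // (subsetP TyS _ uTy).
Qed.

Lemma right_type_similar (Ty : {set T}) j : Ty \subset S ->
  right_type S s Ty j = right_type S p Ty j.
Proof.
move=> TyS; apply: eq_card => u; rewrite !inE.
by case uTy: (u \in Ty); rewrite //= vloc_similar // (subsetP TyS _ uTy).
Qed.

Lemma NL_setI_similar v : v \in S -> NL e s v :&: S = NL e p v :&: S.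
Proof.
move=> vS; apply/setP => u; rewrite !inE.
by case uS: (u \in S); rewrite ?andbF ?andbT // sp_similar.
Qed.

Lemma NR_setI_similar v : v \in S -> NR e s v :&: S = NR e p v :&: S.
Proof.
move=> vS; apply/setP => u; rewrite !inE.
by case uS: (u \in S); rewrite ?andbF ?andbT // sp_similar.
Qed.

Lemma sum_cliques_by_class (w : {set T} -> nat) (G : class_t T -> nat -> nat) :
  (forall nu j, in_classes S nu -> 0 < j <= #|S|.+1 ->
     \sum_(C in cliques_at e S s nu j) w C = \sum_(C in cliques_at e S p nu j) w C) ->
  \sum_(C in cliques e S) G (cclass e S C) (cloc S s C) * w C =
  \sum_(C in cliques e S) G (cclass e S C) (cloc S p C) * w C.
Proof.
move=> same_weight.
apply: (@eq_sum_by_key _ _ _ (fun C => (cclass e S C, cloc S s C))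
  (fun C => (cclass e S C, cloc S p C)) (fun x => G x.1 x.2)) => -[nu j].
have cliques_atE q : \sum_(C in cliques e S | (cclass e S C, cloc S q C) == (nu, j)) w C =
                     \sum_(C in cliques_at e S q nu j) w C.
  by apply: eq_bigl => C; rewrite inE xpair_eqE.
rewrite !cliques_atE.
have [/andP[nu_ok j_ok]|out_of_range] := boolP (in_classes S nu && (0 < j <= #|S|.+1)).
  exact: same_weight.
have no_clique q : is_layout q -> clean e S q -> cliques_at e S q nu j = set0.
  move=> q_layout q_clean; apply/setP => C; rewrite !inE; apply: contraNF out_of_range.
  case/and3P => CS /eqP <- /eqP <-.
  by rewrite cclass_in_classes // (cloc_range q_layout q_clean CS).
by rewrite !no_clique // !big_set0.
Qed.

Lemma imb_v_S_similar beta v :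
  respects_size e S s beta -> respects_size e S p beta -> v \in S ->
  imb_v e s v = imb_v e p v.
Proof.
move=> s_size p_size vS.
have regroup (b : nat -> bool) :
    \sum_(C in cliques e S) ((v \in ctype e S C) && b (cloc S s C)) * #|C| =
    \sum_(C in cliques e S) ((v \in ctype e S C) && b (cloc S p C)) * #|C|.
  pose G (nu : class_t T) j := (v \in nu.1.1) && b j.
  transitivity (\sum_(C in cliques e S) G (cclass e S C) (cloc S s C) * #|C|).
    by apply: eq_bigr => C _; rewrite /G cclass_type.
  rewrite (@sum_cliques_by_class (fun C : {set T} => #|C|) G) => [|nu j nu_ok j_ok]; last first.
    by rewrite s_size ?p_size.
  by apply: eq_bigr => C _; rewrite /G cclass_type.
rewrite /imb_v (card_NL_S s_layout s_clean vS) (card_NR_S s_layout s_clean vS).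
rewrite (card_NL_S p_layout p_clean vS) (card_NR_S p_layout p_clean vS).
rewrite NL_setI_similar // NR_setI_similar // -vloc_similar //.
by rewrite (regroup (fun j => j <= vloc S s v)) (regroup (fun j => vloc S s v < j)).
Qed.

Lemma sum_imb_cliques_similar alpha :
  respects_count e S s alpha -> respects_count e S p alpha ->
  \sum_(C in cliques e S) \sum_(v in C) imb_v e s v =
  \sum_(C in cliques e S) \sum_(v in C) imb_v e p v.
Proof.
move=> s_count p_count.
pose a C j := left_type S s (ctype e S C) j.
pose b C j := right_type S s (ctype e S C) j.
pose G (nu : class_t T) j :=
  block_imb (class_size S nu) (left_type S s nu.1.1 j) (right_type S s nu.1.1 j).
have decompose q : (forall C, C \in cliques e S ->
      \sum_(v in C) imb_v e q v = block_imb #|C| (a C (cloc S q C)) (b C (cloc S q C))) ->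
    \sum_(C in cliques e S) \sum_(v in C) imb_v e q v +
      \sum_(C in cliques e S) block_imb (class_size S (cclass e S C)) 0 0 =
    \sum_(C in cliques e S) block_imb #|C| 0 0 +
      \sum_(C in cliques e S) G (cclass e S C) (cloc S q C) * 1.
  move=> clique_imb; rewrite -!big_split; apply: eq_bigr => C CS /=.
  rewrite clique_imb // muln1 /G cclass_type.
  exact/block_imb_cclass/left_right_type_le/ctype_sub.
apply: (@addIn (\sum_(C in cliques e S) block_imb (class_size S (cclass e S C)) 0 0)).
rewrite (decompose s) => [|C CS]; last exact: sum_imb_clique.
rewrite (decompose p) => [|C CS]; last first.
  rewrite (sum_imb_clique p_layout p_clean CS) /a /b.
  by rewrite left_type_similar ?right_type_similar ?ctype_sub.
congr (_ + _); apply: sum_cliques_by_class => nu j nu_ok j_ok.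
by rewrite !sum1_card s_count ?p_count.
Qed.

End SimilarLayouts.

End TwinCover.

Theorem lemma3 (T : finType) (e : rel T) (S : {set T}) (k : nat)
    (alpha beta : class_t T -> nat -> nat) (sigma pi : seq T) :
  simple_graph e ->
  twin_cover e S -> #|S| = k ->
  spec_fun S alpha -> spec_fun S beta ->
  is_layout sigma -> is_layout pi ->
  clean e S sigma -> clean e S pi ->
  similar S sigma pi ->
  respects_count e S sigma alpha -> respects_size e S sigma beta ->
  respects_count e S pi alpha -> respects_size e S pi beta ->
  imbalance e sigma = imbalance e pi.
Proof.
move=> [e_sym e_irr] S_twin _ _ _ sigma_layout pi_layout sigma_clean pi_clean similar_sp.
move=> sigma_count sigma_size pi_count pi_size.
rewrite !(imbalance_split S e_sym) (sum_imb_cliques_similar e_sym e_irr S_twin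
  sigma_layout pi_layout sigma_clean pi_clean similar_sp sigma_count pi_count).
congr (_ + _); apply: eq_bigr => v vS.
exact: (imb_v_S_similar e_sym S_twin sigma_layout pi_layout sigma_clean pi_clean
  similar_sp sigma_size pi_size vS).
Qed.
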